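(* Let $n\ge 3$ and let $\mathcal{H}$ be the associating hypergraph on $M(D_n,2)$. Then the strong chromatic number is $\overline{\psi}(\mathcal{H})=4n$.
   Context: $D_n=\langle x,y\mid x^n=y^2=1,\ xy=yx^{-1}\rangle$. $M(D_n,2)=\{(g,\alpha): g\in D_n,\ \alpha\in\mathbb{Z}_2\}$ with $(g_1,\alpha_1)\circ(g_2,\alpha_2)=(g_1^{1-\alpha_2} g_2^{(-1)^{\alpha_1}} g_1^{\alpha_2},\ \alpha_1+\alpha_2)$. The associating hypergraph $\mathcal{H}$ has vertex set $M(D_n,2)$ ($4n$ vertices), and a 3-element set $\{a,b,c\}$ of distinct elements is a hyperedge when $(a\circ b)\circ c=a\circ(b\circ c)$. A strong coloring assigns colors to vertices so that any two vertices lying in a common hyperedge receive different colors; $\overline{\psi}(\mathcal{H})$ is the minimum number of colors in a strong coloring. *)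

From mathcomp Require Import all_boot.
Set Implicit Arguments. Unset Strict Implicit. Unset Printing Implicit Defensive.

(* Concrete model of the dihedral group D_n = <x, y | x^n = y^2 = 1, xy = yx^-1>:
   the element (k, s) : 'I_n * bool stands for x^k y^s (0 <= k < n, s in {0,1}). *)
Definition Dn (n : nat) : finType := ('I_n * bool)%type.

Definition modI n (i : 'I_n) (m : nat) : 'I_n :=
  Ordinal (ltn_pmod m (leq_ltn_trans (leq0n i) (ltn_ord i))).

(* x^a y^s * x^b y^t = x^(a + (-1)^s b) y^(s+t) *)
Definition Dmul n (g h : Dn n) : Dn n :=
  let: (a, s) := g in let: (b, t) := h in
  (modI a (a + (if s then n - b else b)), s (+) t).

Definition Done n (g : Dn n) : Dn n := (modI g.1 0, false).

(* inverse: (x^a)^-1 = x^(n-a), (x^a y)^-1 = x^a y *)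
Definition Dinv n (g : Dn n) : Dn n :=
  let: (a, s) := g in if s then (a, true) else (modI a (n - a), false).

(* g ^ e for e in Z_2 = {0,1} (as a nonnegative exponent) *)
Definition Dpow n (g : Dn n) (e : bool) : Dn n := if e then g else Done g.

(* g ^ ((-1)^e) *)
Definition Dpow_sign n (g : Dn n) (e : bool) : Dn n := if e then Dinv g else g.

(* M(D_n, 2) = D_n x Z_2, with Z_2 represented by bool (addition = xor) *)
Definition MD (n : nat) : finType := (Dn n * bool)%type.

(* (g1,a1) o (g2,a2) = (g1^(1-a2) g2^((-1)^a1) g1^a2, a1 + a2) *)
Definition Mop n (u v : MD n) : MD n :=
  let: (g1, a1) := u in let: (g2, a2) := v in
  (Dmul (Dmul (Dpow g1 (~~ a2)) (Dpow_sign g2 a1)) (Dpow g1 a2), a1 (+) a2).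

Definition assoc_triple n (a b c : MD n) : bool :=
  Mop (Mop a b) c == Mop a (Mop b c).

Definition hyperedge n (a b c : MD n) : bool :=
  [&& a != b, b != c, a != c &
   [|| assoc_triple a b c, assoc_triple a c b, assoc_triple b a c,
       assoc_triple b c a, assoc_triple c a b | assoc_triple c b a]].

Definition co_hyperedge n (u v : MD n) : bool := [exists w : MD n, hyperedge u v w].

Definition strong_coloring n k (c : {ffun MD n -> 'I_k}) : bool :=
  [forall u : MD n, forall v : MD n, co_hyperedge u v ==> (c u != c v)].

Definition strong_colorable n (k : nat) : bool :=
  [exists c : {ffun MD n -> 'I_k}, strong_coloring c].

Lemma strong_colorable_ex n : exists k, strong_colorable n k.
Proof.
exists #|MD n|; apply/existsP; exists [ffun u => enum_rank u].
apply/forallP => u; apply/forallP => v; apply/implyP => /existsP [w].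
case/and4P => uv _ _ _; rewrite !ffunE.
by apply: contra uv => /eqP /enum_rank_inj ->.
Qed.

Definition strong_chromatic_number (n : nat) : nat :=
  ex_minn (@strong_colorable_ex n).

From mathcomp Require Import all_boot zify.

(* The identity of M(D_n,2) associates with any two elements, in any position.
   Hence any two distinct vertices lie in a common hyperedge with the identity
   (or, if one of them is the identity, with any third vertex), so a strong
   coloring must be injective and needs all 4n colors. *)

Section AssociatingHypergraph.

Variable n : nat.
Hypothesis n_gt0 : 0 < n.

Definition Dn1 : Dn n := (Ordinal n_gt0, false).
Definition MD1 : MD n := (Dn1, false).

Lemma Dmul1g (g : Dn n) : Dmul Dn1 g = g.
Proof.
case: g => b t; congr pair; apply: val_inj => /=.
by rewrite add0n modn_small.
Qed.

Lemma Dmulg1 (g : Dn n) : Dmul g Dn1 = g.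
Proof.
case: g => a s; rewrite /Dmul /= addbF; congr pair; apply: val_inj => /=.
by case: s; rewrite ?subn0 ?addn0 ?modnDr modn_small.
Qed.

Lemma Done_Dn1 (g : Dn n) : Done g = Dn1.
Proof. by congr pair; apply: val_inj; rewrite /= mod0n. Qed.

Lemma Dinv_Dn1 : Dinv Dn1 = Dn1.
Proof. by congr pair; apply: val_inj; rewrite /= subn0 modnn. Qed.

Local Arguments Dmul : simpl never.
Local Arguments Dinv : simpl never.

Lemma Mop1x (v : MD n) : Mop MD1 v = v.
Proof. by case: v => [g []]; rewrite /Mop /= ?Done_Dn1 Dmul1g Dmulg1. Qed.

Lemma Mopx1 (v : MD n) : Mop v MD1 = v.
Proof. by case: v => [g []]; rewrite /Mop /= ?Dinv_Dn1 Done_Dn1 !Dmulg1. Qed.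

Lemma assoc_triple_MD1 (a b c : MD n) :
  MD1 \in [:: a; b; c] -> assoc_triple a b c.
Proof.
rewrite /assoc_triple !inE => /or3P[] /eqP <-;
  by rewrite ?Mop1x ?Mopx1.
Qed.

Lemma card_MD : #|MD n| = 4 * n.
Proof. by rewrite /MD /Dn !card_prod card_ord card_bool -mulnA mulnC. Qed.

Lemma exists_avoid2 (u v : MD n) : exists w : MD n, w \notin [:: u; v].
Proof.
case: (pickP [predC [:: u; v]]) => [w wP | none]; first by exists w.
have := cardC [in [:: u; v]]; rewrite (eq_card0 none) addn0 card_MD => card_uv.
have := card_size [:: u; v]; rewrite card_uv /=; lia.
Qed.

Lemma co_hyperedge_neq (u v : MD n) : u != v -> co_hyperedge u v.
Proof.
move=> uv; apply/existsP.
have [u1v | u1v] := boolP (MD1 \in [:: u; v]).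
  have [w] := exists_avoid2 u v; rewrite !inE negb_or ![w == _]eq_sym.
  case/andP=> uw vw; exists w; rewrite /hyperedge uv uw vw assoc_triple_MD1 //.
  by move: u1v; rewrite !inE => /orP[] ->; rewrite ?orbT.
move: u1v; rewrite !inE negb_or ![MD1 == _]eq_sym => /andP [u1 v1]; exists MD1.
by rewrite /hyperedge uv u1 v1 assoc_triple_MD1 // !inE eqxx !orbT.
Qed.

Lemma strong_coloring_inj k (c : {ffun MD n -> 'I_k}) :
  strong_coloring c -> injective c.
Proof.
move=> /forallP cP u v cuv; apply/eqP; apply: contraTT (eqxx (c u)) => uv.
by rewrite {2}cuv; move: (cP u) => /forallP /(_ v) /implyP; apply;
  exact: co_hyperedge_neq.
Qed.

Lemma strong_colorable_card_le k : strong_colorable n k -> #|MD n| <= k.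
Proof.
by case/existsP => c /strong_coloring_inj /leq_card; rewrite card_ord.
Qed.

Lemma strong_colorable_card : strong_colorable n #|MD n|.
Proof.
apply/existsP; exists [ffun u => enum_rank u].
apply/forallP => u; apply/forallP => v; apply/implyP => /existsP [w].
case/and4P => uv _ _ _; rewrite !ffunE.
by apply: contra uv => /eqP /enum_rank_inj ->.
Qed.

Lemma strong_chromatic_number_card : strong_chromatic_number n = #|MD n|.
Proof.
rewrite /strong_chromatic_number; case: ex_minnP => m colm minm.
apply/eqP; rewrite eqn_leq minm ?strong_colorable_card //.
exact: strong_colorable_card_le.
Qed.

End AssociatingHypergraph.

Theorem mainTheorem9 (n : nat) (hn : 3 <= n) :
  strong_chromatic_number n = 4 * n.
Proof.
have n_gt0 : 0 < n by apply: leq_trans hn.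
by rewrite (@strong_chromatic_number_card n n_gt0) card_MD.
Qed.
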